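(* Let $(p_D)_{D\in\mathcal{I}}$ be a probability distribution on $\mathcal{I}$ and $X$ a random variable with $P(X=D)=p_D$. Define the guessing-entropy price $$p^G(\mathbf{Q})=G(X)-\sum_{E:\,p_E>0}p_E\cdot G(X\mid \mathbf{Q}(X)=E),\qquad p_E=\sum_{D:\mathbf{Q}(D)=E}p_D.$$ Then $p^G$ is an arbitrage-free instance-independent pricing function.
   Context: $\mathcal{I}$ is a countable nonempty set of database instances; queries are deterministic functions on $\mathcal{I}$; a query bundle is a finite tuple of queries from a language $\mathcal{L}$, evaluated componentwise; $B(\mathcal{L})$ is the set of bundles, closed under concatenation $\mathbf{Q}_1,\mathbf{Q}_2$. For a random variable $Y$ with values in a countable set, enumerate its values $y_1,y_2,\dots$ in order of non-increasing probability and set $G(Y)=\sum_i i\cdot P(Y=y_i)$ (guessing entropy; it is assumed $G(X)<\infty$ so that the price is defined). $G(X\mid\mathbf{Q}(X)=E)$ is the guessing entropy of the conditional distribution of $X$ given $\mathbf{Q}(X)=E$. An instance-independent pricing function $p$ is arbitrage-free if (i) whenever for all $D',D''\in\mathcal{I}$, $\mathbf{Q}_2(D')=\mathbf{Q}_2(D'')$ implies $\mathbf{Q}_1(D')=\mathbf{Q}_1(D'')$, we have $p(\mathbf{Q}_2)\ge p(\mathbf{Q}_1)$; and (ii) $p(\mathbf{Q}_1,\mathbf{Q}_2)\le p(\mathbf{Q}_1)+p(\mathbf{Q}_2)$ for all bundles. *)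

From HB Require Import structures.
From Stdlib Require Import ClassicalEpsilon.
From mathcomp Require Import all_boot all_order all_algebra.
From mathcomp Require Import all_classical all_reals all_analysis.
Set Implicit Arguments. Unset Strict Implicit. Unset Printing Implicit Defensive.
Import Order.TTheory GRing.Theory Num.Theory.
Local Open Scope classical_set_scope.
Local Open Scope ring_scope.

Section Guessing.
Variables (R : realType) (T : Type).

Definition gval (P : T -> R) (e : nat -> option T) (i : nat) : R :=
  if e i is Some y then P y else 0.

Definition guess_order (P : T -> R) (e : nat -> option T) : Prop :=
  [/\ (forall i j y, e i = Some y -> e j = Some y -> i = j),
      (forall y, 0 < P y -> exists i, e i = Some y) &
      (forall i, gval P e i.+1 <= gval P e i)].

Definition guess_sum (P : T -> R) (e : nat -> option T) : \bar R :=
  (\sum_(0 <= i <oo) ((i.+1)%:R * gval P e i)%:E)%E.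

(* guessing entropy G of a distribution P on T: sum_i i * P(y_i) for a
   non-increasing enumeration (chosen by epsilon; its value does not
   depend on the choice) *)
Definition guessing_entropy (P : T -> R) : \bar R :=
  guess_sum P (epsilon (inhabits (fun _ => None)) (guess_order P)).
End Guessing.

Section Pricing.
Variables (R : realType) (I : countType) (W : choiceType).

Definition probE (p : I -> R) (Q : I -> W) (E : W) : R :=
  fine (\esum_(D in [set D | Q D = E]) (p D)%:E).

Definition cond_distr (p : I -> R) (Q : I -> W) (E : W) : I -> R :=
  fun D => if `[< Q D = E >] then p D / probE p Q E else 0.

Definition priceG (p : I -> R) (Q : I -> W) : R :=
  fine (guessing_entropy p) -
  fine (\esum_(E in [set E | 0 < probE p Q E])
          ((probE p Q E)%:E * guessing_entropy (cond_distr p Q E))%E).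
End Pricing.

Section Bundles.
Variables (I : Type) (V : Type).
(* a bundle is a finite tuple of queries, evaluated componentwise *)
Definition eval_bundle (b : seq (I -> V)) (D : I) : seq V := map (fun q => q D) b.
Definition in_B (L : set (I -> V)) (b : seq (I -> V)) : Prop :=
  forall q, List.In q b -> L q.

Definition arbitrage_free (R : realType) (L : set (I -> V))
    (pr : seq (I -> V) -> R) : Prop :=
  (forall Q1 Q2, in_B L Q1 -> in_B L Q2 ->
     (forall D' D'', eval_bundle Q2 D' = eval_bundle Q2 D'' ->
                     eval_bundle Q1 D' = eval_bundle Q1 D'') ->
     pr Q1 <= pr Q2) /\
  (forall Q1 Q2, in_B L Q1 -> in_B L Q2 ->
     pr (Q1 ++ Q2) <= pr Q1 + pr Q2).
End Bundles.

From Stdlib Require Import ClassicalEpsilon.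
From mathcomp Require Import all_boot all_order all_algebra.
From mathcomp Require Import all_classical all_reals all_analysis finmap lra.
Import Order.TTheory GRing.Theory Num.Theory.
Local Open Scope classical_set_scope.
Local Open Scope ring_scope.

(* If g_0 >= g_1 >= ... enumerates a distribution in non-increasing order,
   then min (g_i, g_j) = g_(max i j) and exactly 2k+1 pairs (i, j) have
   maximum k, so 2 G = sum_k (2k+2) g_k = sum_k g_k + sum_(i,j) min (g_i, g_j).
   Both sums are invariant under relabelling, hence
   2 G(P) = sum_y P y + sum_(x,y) min (P x, P y).  Applying this to G(X) and,
   scaled by p_E, to each G(X | Q(X) = E), everything cancels except the pairs
   separated by Q: p^G(Q) = 1/2 sum_(Q x <> Q y) min (p_x, p_y).  This mass can
   only grow when Q is refined, and a pair separated by the bundle Q1, Q2 is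
   separated by Q1 or by Q2; these are the two arbitrage-freeness conditions.
   A non-increasing enumeration exists since every superlevel set {P >= c},
   c > 0, of a summable P is finite: guessing greedily the most likely
   remaining value eventually reaches every value of positive probability. *)

Section esum_extra.
Context {R : realType} {T : choiceType}.
Implicit Types (A B : set T) (f : T -> \bar R).
Local Open Scope ereal_scope.

Lemma esumZl A f (r : R) : (0 <= r)%R -> (forall x, 0 <= f x) ->
  \esum_(x in A) (r%:E * f x) = r%:E * \esum_(x in A) f x.
Proof.
move=> r0 f0; rewrite /esum -ereal_supZl //; last first.
  by apply/set0P; exists 0; exists set0; [exact: fsets_set0|rewrite fsbig_set0].
rewrite image_comp; congr ereal_sup; apply: eq_imagel => X _ /=.
by rewrite ge0_mule_fsumr.
Qed.

Lemma le_esum_subset A B f : A `<=` B -> (forall x, 0 <= f x) ->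
  \esum_(x in A) f x <= \esum_(x in B) f x.
Proof.
move=> AB f0; rewrite esum_mkcond [leRHS]esum_mkcond; apply: le_esum => x _.
by case: ifPn => [/set_mem/AB/mem_set -> //|_]; case: ifP.
Qed.

Lemma esum_subset_eq A B f : A `<=` B -> (forall x, B x -> 0 <= f x) ->
  (forall x, B x -> ~ A x -> f x = 0) ->
  \esum_(x in B) f x = \esum_(x in A) f x.
Proof.
move=> AB f0 fA; rewrite (esumID A) // setIidr // [X in _ + X]esum1 ?adde0 //.
by move=> x [Bx /fA]; apply.
Qed.

Lemma le_esum_setU A B f : (forall x, 0 <= f x) ->
  \esum_(x in A `|` B) f x <= \esum_(x in A) f x + \esum_(x in B) f x.
Proof.
move=> f0; rewrite esum_mkcond (esum_mkcond A) (esum_mkcond B) -esumD;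
  do ?by move=> x _; case: ifP.
apply: le_esum => x _; rewrite in_setU.
by case: (x \in A); case: (x \in B); rewrite ?adde0 ?add0e ?leeDl.
Qed.

End esum_extra.

Lemma esum_fibers {R : realType} {T U : choiceType} (A : set T) (key : T -> U)
    (S : set U) (f : T -> \bar R) : (forall x, 0 <= f x)%E ->
  \esum_(u in S) \esum_(x in A `&` key @^-1` [set u]) f x =
  \esum_(x in A `&` key @^-1` S) f x.
Proof.
move=> f_ge0; rewrite (@esum_esum _ _ _ _ _ (fun _ x => f x)) //.
rewrite (reindex_esum (A `&` key @^-1` S) _ (fun x => (key x, x))) //.
split=> [x [Ax Skx] //| x y _ _ [] // | [u x] [/= Su [Ax kx]]].
by exists x; rewrite // kx.
Qed.

Lemma set_bij_pair {T U : Type} {A : set T} {B : set U} {f : T -> U} :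
  set_bij A B f ->
  set_bij (A `*` A) (B `*` B) (fun w => (f w.1, f w.2)).
Proof.
case=> fAB f_inj f_surj; split.
- by move=> w [/fAB ? /fAB ?].
- move=> [x1 x2] [y1 y2] /set_mem[Ax1 Ax2] /set_mem[Ay1 Ay2] [/= e1 e2].
  by congr pair; apply: f_inj => //; apply: mem_set.
- move=> [u1 u2] [/= /f_surj[x1 Ax1 <-] /f_surj[x2 Ax2 <-]].
  by exists (x1, x2).
Qed.

Lemma finite_set_argmax {T : eqType} {d} {U : orderType d} (f : T -> U)
    [F : set T] [y : T] :
  finite_set F -> F y -> exists2 m, F m & forall z, F z -> (f z <= f m)%O.
Proof.
move=> /finite_seqP[s ->{F}]; elim: s y => [//|a s IH] y _.
case: s IH => [|b s] IH.
  by exists a => [|z]; rewrite /= ?mem_seq1 // => /eqP ->.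
have [m ms m_max] := IH b (mem_head _ _).
have [am|ma] := leP (f a) (f m).
  exists m => [|z]; first by rewrite /= inE ms orbT.
  by rewrite /= inE => /orP[/eqP ->//|/m_max].
exists a => [|z]; first exact: mem_head.
by rewrite /= inE => /orP[/eqP ->//|/m_max/le_trans]; apply; apply: ltW.
Qed.

Section guess_order_existence.
Context {R : realType} {T : countType} (P : T -> R).
Hypothesis P_ge0 : forall y, 0 <= P y.
Hypothesis P_summable : (\esum_(y in [set: T]) (P y)%:E < +oo)%E.

Lemma finite_superlevel c : 0 < c -> finite_set [set y | c <= P y].
Proof.
move=> c0; apply: contrapT => infinite.
set S := \esum_(y in [set: T]) (P y)%:E.
have S_ge0 : (0 <= S)%E by apply: esum_ge0 => y _; rewrite lee_fin.
have S_fin : S \is a fin_num by rewrite ge0_fin_numE.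
pose n := (Num.truncn (fine S / c)).+1.
have [B BA Bn] := infinite_set_fset n infinite.
suff : ((c *+ n)%:E <= S)%E.
  rewrite -[S]fineK // lee_fin -mulr_natl -ler_pdivlMr // mulrC.
  by rewrite /n leNgt mulrC truncnS_gt.
apply: esum_ge; exists [set` B]; first by split.
rewrite fsbig_finite ?finite_fset // set_fsetK sumEFin lee_fin.
apply: le_trans (_ : \sum_(x <- B) c <= _).
  by rewrite big_const_seq count_predT iter_addr_0 ler_pMn2l.
by rewrite [leRHS]big_seq [leLHS]big_seq ler_sum // => x /BA.
Qed.

Definition unguessed (s : seq T) y := 0 < P y /\ y \notin s.
Definition most_likely (s : seq T) y :=
  unguessed s y /\ forall z, unguessed s z -> P z <= P y.

Lemma most_likely_exists s y : unguessed s y -> exists x, most_likely s x.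
Proof.
move=> sy; pose F := [set z | unguessed s z /\ P y <= P z].
have F_fin : finite_set F.
  by apply: (sub_finite_set _ (finite_superlevel _ sy.1)) => z [].
have [m [sm ym] m_max] := finite_set_argmax P F_fin (conj sy (lexx _)).
exists m; split=> // z sz; have [yz|zy] := leP (P y) (P z); first exact: m_max.
exact: ltW (lt_le_trans zy ym).
Qed.

Definition next_guess s : option T :=
  if pselect (exists x, most_likely s x) is left h then Some (projT1 (cid h))
  else None.

Lemma next_guessP s : if next_guess s is Some x then most_likely s x
  else forall y, ~ unguessed s y.
Proof.
rewrite /next_guess; case: pselect => [h|h]; first exact: projT2 (cid h).
by move=> y /most_likely_exists.
Qed.

Fixpoint guessed n : seq T :=
  if n is m.+1 then guessed m ++ seq_of_opt (next_guess (guessed m)) else [::].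

Definition greedy_guess n := next_guess (guessed n).

Lemma guessed_mono m n : (m <= n)%N -> {subset guessed m <= guessed n}.
Proof.
move=> /subnK <-; elim: (n - m)%N => [//|k IH] x /IH.
by rewrite addSn /= mem_cat => ->.
Qed.

Lemma mem_guessed n x :
  x \in guessed n <-> exists2 i, (i < n)%N & greedy_guess i = Some x.
Proof.
elim: n => [|n IH]; first by split=> // -[].
rewrite /= mem_cat /greedy_guess; split.
  case/orP=> [/IH[i ltin ei]|]; first by exists i => //; apply: ltnW.
  by case E: next_guess => [y|//]; rewrite mem_seq1 => /eqP ->; exists n.
move=> [i]; rewrite ltnS leq_eqVlt => /orP[/eqP -> ->|ltin ei].
  by rewrite mem_seq1 eqxx orbT.
by apply/orP; left; apply/IH; exists i.
Qed.

Lemma greedy_guess_inj i j y :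
  greedy_guess i = Some y -> greedy_guess j = Some y -> i = j.
Proof.
wlog ltij : i j / (i < j)%N => [wlog_lt ei ej|ei ej].
  by case: (ltngtP i j) => [/wlog_lt|/wlog_lt|//]; [apply | move=> /(_ ej ei)].
have := next_guessP (guessed j); rewrite -/(greedy_guess j) ej => -[[_]].
by have -> : y \in guessed j by apply/mem_guessed; exists i.
Qed.

Lemma greedy_guess_order : guess_order P greedy_guess.
Proof.
split; first exact: greedy_guess_inj.
- move=> y Py; apply: contrapT => never.
  have unguessed_y n : unguessed (guessed n) y.
    by split=> //; apply/negP => /mem_guessed[i _ ei]; apply: never; exists i.
  pose x n := odflt y (greedy_guess n).
  have greedyE n : greedy_guess n = Some (x n) /\ P y <= P (x n).
    have := next_guessP (guessed n); rewrite /x /greedy_guess.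
    by case: next_guess => [z [_ /(_ y (unguessed_y n))]|/(_ y (unguessed_y n))].
  have x_inj : injective x.
    move=> i j eij; apply: (@greedy_guess_inj _ _ (x i)); first by apply greedyE.
    by rewrite eij; apply greedyE.
  have : finite_set (x @` [set: nat]).
    apply: (sub_finite_set _ (finite_superlevel _ Py)) => _ [n _ <-].
    by apply greedyE.
  by rewrite (eq_finite_set (inj_card_eq (in2W x_inj))); apply: infinite_nat.
- move=> i; rewrite /gval.
  have := next_guessP (guessed i.+1); rewrite -/(greedy_guess i.+1).
  case: (greedy_guess i.+1) => [y [[Py yi] _]|_]; last first.
    by case: greedy_guess.
  have y_unguessed : unguessed (guessed i) y.
    by split=> //; apply: contra yi; apply: guessed_mono.
  have := next_guessP (guessed i); rewrite -/(greedy_guess i).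
  by case: greedy_guess => [x [_ /(_ y y_unguessed)]|/(_ y y_unguessed)].
Qed.

End guess_order_existence.

Section guess_sum_pairs.
Context {R : realType} {T : choiceType} (P : T -> R) (e : nat -> option T).
Hypotheses (P_ge0 : forall y, 0 <= P y) (e_order : guess_order P e).
Local Notation g := (gval P e).
Local Notation lower := [set z : nat * nat | (z.2 < z.1)%N].

Lemma gval_ge0 i : 0 <= g i.
Proof. by rewrite /gval; case: (e i). Qed.

Lemma gval_le m n : (m <= n)%N -> g n <= g m.
Proof.
move=> /subnK <-; elim: (n - m)%N => [//|k IH].
by case: e_order => _ _ /(_ (k + m)%N) /le_trans; apply.
Qed.

Lemma guess_sum_split :
  guess_sum P e =
  (\esum_(i in [set: nat]) (g i)%:E + \esum_(z in lower) (g z.1)%:E)%E.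
Proof.
have g_ge0 i : (0 <= (g i)%:E)%E by rewrite lee_fin gval_ge0.
rewrite /guess_sum nneseries_esumT => [|n]; last first.
  by rewrite lee_fin mulr_ge0 ?gval_ge0.
have -> : lower = [set: nat] `*`` (fun i => `I_i).
  by apply/seteqP; split=> -[a b] //= [].
rewrite -(@esum_esum _ _ _ _ _ (fun i _ => (g i)%:E)) // -esumD //; last first.
  by move=> i _; apply: esum_ge0.
apply: eq_esum => i _; rewrite esum_fset ?finite_II // -fsbig_ord.
by rewrite sumEFin sumr_const card_ord -EFinD mulr_natl mulrS.
Qed.

(* [min (g i) (g j) = g (maxn i j)]; split the pairs by the sign of [i - j]. *)
Lemma esum_gval_min : \esum_(z in [set: nat * nat]) (Num.min (g z.1) (g z.2))%:E =
  (\esum_(z in lower) (g z.1)%:E + \esum_(i in [set: nat]) (g i)%:E +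
   \esum_(z in lower) (g z.1)%:E)%E.
Proof.
have min_ge0 z : (0 <= (Num.min (g z.1) (g z.2))%:E)%E.
  by rewrite lee_fin le_min !gval_ge0.
rewrite (esumID lower) // setTI.
rewrite (esumID [set z : nat * nat | z.1 = z.2]
  ([set: nat * nat] `&` ~` lower)) //.
rewrite -addeA; congr (_ + (_ + _))%E.
- by apply: eq_esum => z /= /ltnW/gval_le lez; rewrite min_l.
- have -> : [set: nat * nat] `&` ~` lower `&` [set z | z.1 = z.2] =
            (fun i => (i, i)) @` [set: nat].
    apply/seteqP; split=> [[a b] [_ /= ->]|_ [i _ <-]]; first by exists b.
    by split=> //; split=> //=; rewrite ltnn.
  by rewrite esum_image => [|i j _ _ []//]; under eq_esum do rewrite minxx.
- have -> : [set: nat * nat] `&` ~` lower `&` ~` [set z | z.1 = z.2] =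
            (fun z => (z.2, z.1)) @` lower.
    apply/seteqP; split=> [[a b] [[_ /= /negP]]|_ [[a b] /= ba <-]].
      by rewrite -leqNgt leq_eqVlt => /orP[/eqP -> //|ab _]; exists (b, a).
    split=> [|/= ab]; last by rewrite ab ltnn in ba.
    by split=> //=; rewrite ltnNge ltnW.
  rewrite esum_image => [|[a b] [c d] _ _ [-> ->] //].
  by apply: eq_esum => -[a b] /= /ltnW/gval_le ?; rewrite min_r.
Qed.

Lemma guess_sum_double_gval : (guess_sum P e + guess_sum P e)%E =
  (\esum_(i in [set: nat]) (g i)%:E +
   \esum_(z in [set: nat * nat]) (Num.min (g z.1) (g z.2))%:E)%E.
Proof.
by rewrite guess_sum_split esum_gval_min -!addeA.
Qed.

Let eq0_of_nlt0 {x : R} : 0 <= x -> ~ 0 < x -> x = 0.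
Proof. by move=> x_ge0 /negP; rewrite lt0r x_ge0 andbT negbK => /eqP. Qed.

Let rank y := xget 0%N [set i | e i = Some y].

Let e_rank {y} : 0 < P y -> e (rank y) = Some y.
Proof. by case: e_order => _ e_cover _ /e_cover; apply: xgetPex. Qed.

Let gval_rank {y} : 0 < P y -> g (rank y) = P y.
Proof. by move=> Py; rewrite /gval e_rank. Qed.

Let rank_bij : set_bij [set y | 0 < P y] [set i | 0 < g i] rank.
Proof.
split.
- by move=> y /= Py; rewrite gval_rank.
- move=> y y' /set_mem Py /set_mem Py' eq_rank.
  by have := e_rank Py; rewrite eq_rank e_rank // => -[].
- move=> i /=; rewrite /gval; case ei: (e i) => [y|]; last by rewrite ltxx.
  move=> Py; exists y => //; case: e_order => e_inj _ _.
  exact: e_inj (e_rank Py) ei.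
Qed.

Lemma esum_gval :
  \esum_(i in [set: nat]) (g i)%:E = \esum_(y in [set: T]) (P y)%:E.
Proof.
rewrite (esum_subset_eq ([set i | 0 < g i])) //; last 2 first.
- by move=> i _; rewrite lee_fin gval_ge0.
- by move=> i _ gi; rewrite (eq0_of_nlt0 (gval_ge0 i) gi).
rewrite [RHS](esum_subset_eq ([set y | 0 < P y])) //; last 2 first.
- by move=> y _; rewrite lee_fin.
- by move=> y _ Py; rewrite (eq0_of_nlt0 (P_ge0 y) Py).
by rewrite (reindex_esum _ _ _ _ rank_bij); apply: eq_esum => y /gval_rank ->.
Qed.

Lemma esum_gval_min_pairs :
  \esum_(z in [set: nat * nat]) (Num.min (g z.1) (g z.2))%:E =
  \esum_(w in [set: T * T]) (Num.min (P w.1) (P w.2))%:E.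
Proof.
have min_eq0 (x y : R) :
    0 <= x -> 0 <= y -> ~ (0 < x /\ 0 < y) -> Num.min x y = 0.
  move=> x0 y0 xy; have [x_gt0|x_le0] := pselect (0 < x).
    by rewrite (eq0_of_nlt0 y0) ?min_r // => y_gt0; apply: xy.
  by rewrite (eq0_of_nlt0 x0) ?min_l.
rewrite (esum_subset_eq ([set i | 0 < g i] `*` [set i | 0 < g i])) //;
  last 2 first.
- by move=> z _; rewrite lee_fin le_min !gval_ge0.
- by move=> z _ gz; rewrite min_eq0 ?gval_ge0.
rewrite [RHS](esum_subset_eq ([set y | 0 < P y] `*` [set y | 0 < P y])) //;
  last 2 first.
- by move=> w _; rewrite lee_fin le_min !P_ge0.
- by move=> w _ Pw; rewrite min_eq0.
rewrite (reindex_esum _ _ _ _ (set_bij_pair rank_bij)).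
by apply: eq_esum => -[y y'] [/= /gval_rank -> /gval_rank ->].
Qed.

Lemma guess_sum_double : (guess_sum P e + guess_sum P e)%E =
  (\esum_(y in [set: T]) (P y)%:E +
   \esum_(w in [set: T * T]) (Num.min (P w.1) (P w.2))%:E)%E.
Proof. by rewrite guess_sum_double_gval esum_gval esum_gval_min_pairs. Qed.

End guess_sum_pairs.

Lemma guessing_entropy_ge0 {R : realType} {T : Type} (P : T -> R) :
  (forall y, 0 <= P y) -> (0 <= guessing_entropy P)%E.
Proof.
move=> P_ge0; apply: nneseries_ge0 => n _ _.
by rewrite lee_fin mulr_ge0 // /gval; case: (_ n).
Qed.

Lemma guessing_entropy_double {R : realType} {T : countType} (P : T -> R) :
  (forall y, 0 <= P y) -> (\esum_(y in [set: T]) (P y)%:E < +oo)%E ->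
  (guessing_entropy P + guessing_entropy P)%E =
  (\esum_(y in [set: T]) (P y)%:E +
   \esum_(w in [set: T * T]) (Num.min (P w.1) (P w.2))%:E)%E.
Proof.
move=> P_ge0 P_summable; apply: guess_sum_double => //.
by apply: epsilon_spec; exists (greedy_guess P); apply: greedy_guess_order.
Qed.

Lemma fine_sub_of_double {R : realType} (a b c d : \bar R) :
  a \is a fin_num -> (a + a = 1 + (c + d))%E -> (b + b = 1 + c)%E ->
  fine a - fine b = fine d / 2.
Proof.
move=> a_fin a2 b2.
have : (1 + (c + d))%E \is a fin_num by rewrite -a2 fin_numD a_fin.
rewrite !fin_numD /= => /andP[c_fin d_fin].
have : (b + b)%E \is a fin_num by rewrite b2 fin_numD c_fin.
rewrite fin_numD andbb => b_fin.
move: a2 b2; rewrite -(fineK a_fin) -(fineK b_fin) -(fineK c_fin) -(fineK d_fin).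
rewrite -!EFinD => -[a2] [b2] /=; lra.
Qed.

Definition separated_mass {R : realType} {T : choiceType} {W : Type}
    (p : T -> R) (Q : T -> W) : \bar R :=
  \esum_(w in [set w : T * T | Q w.1 <> Q w.2]) (Num.min (p w.1) (p w.2))%:E.

Section separated_mass.
Context {R : realType} {T : choiceType} (p : T -> R).
Hypothesis p_ge0 : forall x, 0 <= p x.

Let min_ge0 (w : T * T) : (0 <= (Num.min (p w.1) (p w.2))%:E)%E.
Proof. by rewrite lee_fin le_min !p_ge0. Qed.

Lemma le_separated_mass {W1 W2 : Type} (Q1 : T -> W1) (Q2 : T -> W2) :
  (forall x y, Q2 x = Q2 y -> Q1 x = Q1 y) ->
  (separated_mass p Q1 <= separated_mass p Q2)%E.
Proof. by move=> Q21; apply: le_esum_subset => // w /= + /Q21. Qed.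

Lemma separated_mass_subadd {W W1 W2 : Type} (Q : T -> W) (Q1 : T -> W1)
    (Q2 : T -> W2) :
  (forall x y, Q1 x = Q1 y -> Q2 x = Q2 y -> Q x = Q y) ->
  (separated_mass p Q <= separated_mass p Q1 + separated_mass p Q2)%E.
Proof.
move=> Q12; rewrite /separated_mass.
apply: (le_trans _ (le_esum_setU _ _ _ min_ge0)).
apply: le_esum_subset => // w /= Qw.
by have [Q1w|] := pselect (Q1 w.1 = Q1 w.2); [right=> /(Q12 _ _ Q1w) | left].
Qed.

Lemma separated_mass_fin {W : Type} (Q : T -> W) :
  \esum_(w in [set: T * T]) (Num.min (p w.1) (p w.2))%:E \is a fin_num ->
  separated_mass p Q \is a fin_num.
Proof.
rewrite !ge0_fin_numE ?esum_ge0 //; apply: le_lt_trans.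
exact: le_esum_subset.
Qed.

End separated_mass.

Section priceG_separated_mass.
Context {R : realType} {I : countType} {W : choiceType} (p : I -> R) (Q : I -> W).
Hypotheses (p_ge0 : forall D, 0 <= p D)
  (p_sum1 : (\esum_(D in [set: I]) (p D)%:E)%E = 1%E).
Local Notation cell E := [set D | Q D = E].
Local Notation cell2 E := [set w : I * I | Q w.1 = E /\ Q w.2 = E].
Local Notation pE := (probE p Q).
Local Notation mn w := (Num.min (p w.1) (p w.2))%:E.

Let mn_ge0 w : (0 <= mn w)%E.
Proof. by rewrite lee_fin le_min !p_ge0. Qed.

Let in_cell E D : (D \in cell E) = (Q D == E).
Proof. by apply/idP/eqP => [/set_mem|/mem_set]. Qed.

Let in_cell2 E w : (w \in cell2 E) = (Q w.1 == E) && (Q w.2 == E).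
Proof.
by apply/idP/andP => [/set_mem[-> ->]|[/eqP Q1 /eqP Q2]] //; apply: mem_set.
Qed.

Lemma probE_EFin E : (pE E)%:E = \esum_(D in cell E) (p D)%:E.
Proof.
have cell_ge0 : (0 <= \esum_(D in cell E) (p D)%:E)%E.
  by apply: esum_ge0 => D _; rewrite lee_fin.
rewrite /probE fineK // ge0_fin_numE // (le_lt_trans _ (ltry 1)) // -p_sum1.
by apply: le_esum_subset => // D; rewrite lee_fin.
Qed.

Lemma probE_ge0 E : 0 <= pE E.
Proof.
by rewrite -lee_fin probE_EFin; apply: esum_ge0 => D _; rewrite lee_fin.
Qed.

Lemma le_probE D : p D <= pE (Q D).
Proof.
rewrite -lee_fin probE_EFin -(@esum_set1 _ _ D (fun x => (p x)%:E)) ?lee_fin //.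
by apply: le_esum_subset => [x -> //|x]; rewrite lee_fin.
Qed.

Let p_eq0 D : ~ 0 < pE (Q D) -> p D = 0.
Proof.
move=> /negP; rewrite -leNgt => /(le_trans (le_probE D)) pD_le0.
by apply/le_anti; rewrite pD_le0 p_ge0.
Qed.

Lemma cond_distr_ge0 E D : 0 <= cond_distr p Q E D.
Proof.
by rewrite /cond_distr; case: ifP => // _; rewrite divr_ge0 ?probE_ge0.
Qed.

Lemma probE_cond_distr E D : 0 < pE E ->
  pE E * cond_distr p Q E D = if Q D == E then p D else 0.
Proof.
move=> pE_gt0; rewrite /cond_distr; case: eqP => [QDE|QDE].
  by rewrite asboolT // mulrC divfK // gt_eqF.
by rewrite asboolF // mulr0.
Qed.

Lemma esum_cond_distr E : 0 < pE E ->
  \esum_(D in [set: I]) (cond_distr p Q E D)%:E = 1%E.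
Proof.
move=> pE_gt0; have pE_neq0 : pE E != 0 by rewrite gt_eqF.
have : ((pE E)%:E * (\esum_(D in [set: I]) (cond_distr p Q E D)%:E)
         = (pE E)%:E)%E.
  rewrite -esumZl ?ltW // => [|D]; last by rewrite lee_fin cond_distr_ge0.
  rewrite [RHS]probE_EFin [RHS]esum_mkcond; apply: eq_esum => D _.
  by rewrite -EFinM probE_cond_distr // in_cell; case: ifP.
move=> /(congr1 (fun x => ((pE E)^-1%:E * x)%E)).
by rewrite muleA -!EFinM mulVf // mul1e.
Qed.

Lemma probE_min_cond_distr E w : 0 < pE E ->
  pE E * Num.min (cond_distr p Q E w.1) (cond_distr p Q E w.2) =
  if (Q w.1 == E) && (Q w.2 == E) then Num.min (p w.1) (p w.2) else 0.
Proof.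
move=> pE_gt0; rewrite minr_pMr ?ltW // !probE_cond_distr //.
by case: eqP => _; case: eqP => _ //=;
  [apply: min_r | apply: min_l | apply: minxx].
Qed.

Lemma probE_guessing_entropy_cond E : 0 < pE E ->
  ((pE E)%:E * guessing_entropy (cond_distr p Q E) +
   (pE E)%:E * guessing_entropy (cond_distr p Q E))%E =
  (\esum_(D in cell E) (p D)%:E + \esum_(w in cell2 E) mn w)%E.
Proof.
move=> pE_gt0; have c_ge0 := cond_distr_ge0 E.
rewrite -ge0_muleDr ?guessing_entropy_ge0 //.
rewrite guessing_entropy_double //; last first.
  by rewrite esum_cond_distr // ltry.
have cmin_ge0 (w : I * I) :
    (0 <= (Num.min (cond_distr p Q E w.1) (cond_distr p Q E w.2))%:E)%E.
  by rewrite lee_fin le_min !c_ge0.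
rewrite ge0_muleDr; last 2 first.
- by apply: esum_ge0 => D _; rewrite lee_fin.
- by apply: esum_ge0 => w _.
rewrite (esum_mkcond (cell E)) (esum_mkcond (cell2 E)); congr (_ + _)%E.
  rewrite -esumZl; [|exact: ltW|by move=> D; rewrite lee_fin].
  by apply: eq_esum => D _; rewrite -EFinM probE_cond_distr // in_cell; case: ifP.
rewrite -esumZl; [|exact: ltW|exact: cmin_ge0].
apply: eq_esum => w _.
by rewrite -EFinM probE_min_cond_distr // in_cell2; case: ifP.
Qed.

Local Notation positive := [set E | 0 < pE E].

Lemma esum_probE_cells :
  \esum_(E in positive) \esum_(D in cell E) (p D)%:E = 1%E.
Proof.
under eq_esum do rewrite -[cell _]setTI.
rewrite esum_fibers => [|D]; last by rewrite lee_fin.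
rewrite setTI -p_sum1; apply/esym/esum_subset_eq => // D _.
  by rewrite lee_fin.
by move=> /p_eq0 ->.
Qed.

Lemma esum_probE_cells2 :
  \esum_(E in positive) \esum_(w in cell2 E) mn w =
  \esum_(w in [set w : I * I | Q w.1 = Q w.2]) mn w.
Proof.
have cell2E E : cell2 E =
    [set w : I * I | Q w.1 = Q w.2] `&` (fun w => Q w.1) @^-1` [set E].
  by apply/seteqP; split=> w /= [Q1 Q2]; [rewrite Q1 Q2 | rewrite -Q1].
under eq_esum do rewrite cell2E.
rewrite esum_fibers //; apply/esym/esum_subset_eq => // w /= Qw nQw.
by rewrite p_eq0 ?min_l // => Qw1; apply: nQw.
Qed.

Lemma esum_probE_guessing_entropy_cond :
  let A := \esum_(E in positive)
             ((pE E)%:E * guessing_entropy (cond_distr p Q E))%E in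
  (A + A = 1 + \esum_(w in [set w : I * I | Q w.1 = Q w.2]) mn w)%E.
Proof.
have term_ge0 E : (0 <= (pE E)%:E * guessing_entropy (cond_distr p Q E))%E.
  rewrite mule_ge0 ?lee_fin ?probE_ge0 // guessing_entropy_ge0 // => D.
  exact: cond_distr_ge0.
rewrite /= -esumD // (eq_esum probE_guessing_entropy_cond) esumD.
- by rewrite esum_probE_cells esum_probE_cells2.
- by move=> E _; apply: esum_ge0 => D _; rewrite lee_fin.
- by move=> E _; apply: esum_ge0.
Qed.

Lemma esum_min_pairs_fin : (guessing_entropy p < +oo)%E ->
  \esum_(w in [set: I * I]) mn w \is a fin_num.
Proof.
move=> G_fin; have G_fin' : guessing_entropy p \is a fin_num.
  by rewrite ge0_fin_numE ?guessing_entropy_ge0.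
have := guessing_entropy_double p p_ge0; rewrite p_sum1 => /(_ (ltry 1)) G2.
have : (1 + \esum_(w in [set: I * I]) mn w)%E \is a fin_num.
  by rewrite -G2 fin_numD G_fin'.
by rewrite fin_numD => /andP[].
Qed.

Lemma priceG_separated_mass : (guessing_entropy p < +oo)%E ->
  priceG p Q = fine (separated_mass p Q) / 2.
Proof.
move=> G_fin.
apply: fine_sub_of_double; last exact: esum_probE_guessing_entropy_cond.
- by rewrite ge0_fin_numE ?guessing_entropy_ge0.
- rewrite guessing_entropy_double //; last by rewrite p_sum1 ltry.
  by rewrite p_sum1 (esumID [set w | Q w.1 = Q w.2]) // !setTI.
Qed.

End priceG_separated_mass.

Theorem lemma19 (R : realType) (I : countType) (V : choiceType)
  (L : set (I -> V)) (p : I -> R)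
  (p_ge0 : forall D, 0 <= p D)
  (p_sum1 : (\esum_(D in [set: I]) (p D)%:E)%E = 1%E)
  (GX_fin : (guessing_entropy p < +oo)%E) :
  arbitrage_free L (fun b : seq (I -> V) => priceG p (eval_bundle b)).
Proof.
have mass_fin b : separated_mass p (eval_bundle b) \is a fin_num.
  exact/separated_mass_fin/esum_min_pairs_fin.
have price b :
    priceG p (eval_bundle b) = fine (separated_mass p (eval_bundle b)) / 2.
  exact: priceG_separated_mass.
split=> Q1 Q2 _ _ => [Q21|]; rewrite !price.
  by rewrite ler_wpM2r ?invr_ge0 // fine_le // le_separated_mass.
rewrite -mulrDl ler_wpM2r ?invr_ge0 // -fineD // fine_le ?fin_numD ?mass_fin //.
apply: separated_mass_subadd => // D D'.
by rewrite /eval_bundle !map_cat => -> ->.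
Qed.
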